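(* Let $f\in\mathbb{Z}[[x]]$ with $f(0)=0$, $f'(0)\in\{1,-1\}$, let $\rho,\sigma,\pi\in\mathbb{Z}$, and set $$g(x)=\left(\frac{f(x)}{x}\right)^{\rho}\big(f'(x)\big)^{\sigma}\left(\frac{f(x)-1}{x-1}\right)^{\pi}.$$ Suppose the Riordan array $\upsilon_f[\rho,\sigma,\pi]=(g(x),f(x))$ is an involution. Then the almost Riordan array $$\left(\left(\frac{f(x)}{x}\right)^{\rho-1}\big(f'(x)\big)^{\sigma}\left(\frac{f(x)-1}{x-1}\right)^{\pi};\ g(x),\ f(x)\right)$$ is also an involution in the group of almost Riordan arrays of first order.
   Context: All matrices are infinite lower-triangular with rows and columns indexed by $n,k\ge0$. $[x^n]h(x)$ denotes the coefficient of $x^n$ in $h$. The Riordan array $(g,f)$ is the matrix with entries $[x^n]g(x)f(x)^k$; it is an involution if $(g,f)^2=(1,x)$, equivalently $g(x)g(f(x))=1$ and $f(f(x))=x$. An almost Riordan array of first order $(a;g,f)$ has associated matrix $M$ with $M_{0,0}=a_0$, $M_{0,k}=0$ for $k\ge1$, $M_{n,0}=a_n$ for $n\ge1$, and $M_{n,k}=[x^{n-1}]\,g(x)f(x)^{k-1}$ for $n,k\ge1$; it is an involution if $M^2=I$. *)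

(* Formal power series over Z are coefficient sequences nat -> int;
   infinite lower-triangular matrices are functions nat -> nat -> int. *)
From HB Require Import structures.
From mathcomp Require Import all_boot all_order all_algebra.
Set Implicit Arguments. Unset Strict Implicit. Unset Printing Implicit Defensive.
Import Order.TTheory GRing.Theory Num.Theory.
Local Open Scope ring_scope.

Definition ps := nat -> int.

Definition psone : ps := fun n => (n == 0%N)%:R.
Definition pssub (a b : ps) : ps := fun n => a n - b n.
Definition psmul (a b : ps) : ps := fun n => \sum_(i < n.+1) a i * b (n - i)%N.
Definition pspow (a : ps) (k : nat) : ps := iter k (psmul a) psone.

(* multiplicative inverse of a series whose constant term is a unit of Z
   (coefficients computed by the standard recursion) *)
Fixpoint psinv_seq (a : ps) (n : nat) : seq int :=
  match n with
  | 0%N => [:: (a 0%N)^-1]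
  | n'.+1 => let s := psinv_seq a n' in
      rcons s (- (a 0%N)^-1 * \sum_(1 <= i < n'.+2) a i * s`_(n'.+1 - i))
  end.
Definition psinv (a : ps) : ps := fun n => (psinv_seq a n)`_n.

Definition pszpow (a : ps) (z : int) : ps :=
  match z with
  | Posz k => pspow a k
  | Negz k => pspow (psinv a) k.+1
  end.

Definition psderiv (a : ps) : ps := fun n => a n.+1 *+ n.+1.
(* a(x)/x, for a with a(0) = 0 *)
Definition psdivx (a : ps) : ps := fun n => a n.+1.
(* the all-ones series 1/(1-x) *)
Definition psgeom : ps := fun _ => 1.
(* (a(x)-1)/(x-1) = (1-a(x)) * 1/(1-x) *)
Definition psquot1 (a : ps) : ps := psmul (pssub psone a) psgeom.

Definition imat := nat -> nat -> int.
Definition imul (A B : imat) : imat :=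
  fun n k => \sum_(j < n.+1) A n j * B j k.
Definition iid : imat := fun n k => (n == k)%:R.
Definition involution (M : imat) : Prop := forall n k, imul M M n k = iid n k.

Definition riordan (g f : ps) : imat := fun n k => psmul g (pspow f k) n.

Definition almost_riordan (a g f : ps) : imat := fun n k =>
  match k, n with
  | 0%N, _ => a n
  | _.+1, 0%N => 0
  | k'.+1, n'.+1 => psmul g (pspow f k') n'
  end.

Definition upsilon_g (f : ps) (rho sigma pi : int) : ps :=
  psmul (psmul (pszpow (psdivx f) rho) (pszpow (psderiv f) sigma))
        (pszpow (psquot1 f) pi).

(* If the Riordan array R = (g, f) is an involution, write T_h for the Toeplitz
   matrix of a series h and D for the shift matrix (ones on the subdiagonal).
   Then R D = T_f R, D T_(f/x) = T_f, and T_(f/x) M = R for the almost Riordan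
   array M of the theorem, because its first column a satisfies a (f/x) = g.
   From R^2 = 1 these relations give D = R T_f R = D (T_(f/x) R)^2, hence
   (T_(f/x) R)^2 = 1 since D is left cancellable; so also (R T_(f/x))^2 = 1,
   M = R T_(f/x), and M^2 = 1. *)
From mathcomp Require Import all_boot all_algebra.
From mathcomp Require Import zify.
From Stdlib Require Import FunctionalExtensionality.
Set Implicit Arguments. Unset Strict Implicit. Unset Printing Implicit Defensive.
Import GRing.Theory.
Local Open Scope ring_scope.

Lemma ps_ext (a b : ps) : (forall n, a n = b n) -> a = b.
Proof. exact: functional_extensionality. Qed.

Lemma imat_ext (A B : imat) : (forall n k, A n k = B n k) -> A = B.
Proof. by move=> eqAB; do 2![apply: functional_extensionality => ?]. Qed.

Definition ps_trunc (N : nat) (a : ps) : {poly int} := \poly_(i < N) a i.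

Lemma psmul_trunc a b N n : (n < N)%N ->
  psmul a b n = (ps_trunc N a * ps_trunc N b)`_n.
Proof.
move=> ltnN; rewrite coefM; apply: eq_bigr => -[i /= lein] _.
by rewrite !coef_poly !(leq_ltn_trans _ ltnN) ?leq_subr // -ltnS.
Qed.

Lemma coef_trunc_psmul a b N n : (n < N)%N ->
  (ps_trunc N (psmul a b))`_n = (ps_trunc N a * ps_trunc N b)`_n.
Proof. by move=> ltnN; rewrite coef_poly ltnN (psmul_trunc a b ltnN). Qed.

Lemma coefM_eql (p q r : {poly int}) n :
  (forall j, (j <= n)%N -> p`_j = q`_j) -> (p * r)`_n = (q * r)`_n.
Proof.
by move=> eqpq; rewrite !coefM; apply: eq_bigr => i _; rewrite eqpq // -ltnS.
Qed.

Lemma psmulC a b : psmul a b = psmul b a.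
Proof.
apply: ps_ext => n.
by rewrite (psmul_trunc a b (ltnSn n)) (psmul_trunc b a (ltnSn n)) mulrC.
Qed.

Lemma psmulA a b c : psmul a (psmul b c) = psmul (psmul a b) c.
Proof.
apply: ps_ext => n; rewrite !(psmul_trunc _ _ (ltnSn n)).
have trunc_mul x y j : (j <= n)%N ->
    (ps_trunc n.+1 (psmul x y))`_j = (ps_trunc n.+1 x * ps_trunc n.+1 y)`_j.
  by move=> lejn; rewrite coef_trunc_psmul.
rewrite mulrC (coefM_eql _ (trunc_mul b c)) (coefM_eql _ (trunc_mul a b)).
by rewrite mulrC mulrA.
Qed.

Lemma psmul1 a : psmul psone a = a.
Proof.
apply: ps_ext => n; rewrite /psmul big_ord_recl /= mul1r subn0 big1 ?addr0 //.
by move=> i _; rewrite mul0r.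
Qed.

Lemma psmulr1 a : psmul a psone = a.
Proof. by rewrite psmulC psmul1. Qed.

Definition psshift (a : ps) : ps := fun n => if n is n'.+1 then a n' else 0.

Lemma psmul_shiftl a b : psmul (psshift a) b = psshift (psmul a b).
Proof.
apply: ps_ext => -[|n]; rewrite /psmul big_ord_recl /= mul0r add0r //.
by rewrite big_ord0.
Qed.

Lemma psmul_shiftr a b : psmul a (psshift b) = psshift (psmul a b).
Proof. by rewrite psmulC psmul_shiftl psmulC. Qed.

Lemma psshift_divx f : f 0%N = 0 -> psshift (psdivx f) = f.
Proof. by move=> f0; apply: ps_ext => -[]. Qed.

Lemma size_psinv_seq a n : size (psinv_seq a n) = n.+1.
Proof. by elim: n => //= n IHn; rewrite size_rcons IHn. Qed.

Lemma nth_psinv_seq a n i : (i <= n)%N -> (psinv_seq a n)`_i = psinv a i.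
Proof.
elim: n => [|n IHn]; first by rewrite leqn0 => /eqP ->.
rewrite leq_eqVlt => /orP[/eqP -> // | ltin].
by rewrite /= nth_rcons size_psinv_seq ltin IHn.
Qed.

Lemma psinvS a n : psinv a n.+1 =
  - (a 0%N)^-1 * \sum_(1 <= i < n.+2) a i * psinv a (n.+1 - i)%N.
Proof.
rewrite /psinv /= nth_rcons size_psinv_seq ltnn eqxx; congr (_ * _).
apply: eq_big_nat => -[|i] // _; rewrite nth_psinv_seq //.
by rewrite subSS leq_subr.
Qed.

Lemma psmulVr a : a 0%N \is a GRing.unit -> psmul (psinv a) a = psone.
Proof.
move=> ua; rewrite psmulC; apply: ps_ext => -[|n]; rewrite /psmul /psone.
  by rewrite big_ord1 mulrV.
rewrite big_ord_recl /= subn0 psinvS mulrA mulrN mulrV // mulN1r.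
rewrite big_add1 big_mkord addrC; apply/eqP; rewrite subr_eq0; apply/eqP.
by apply: eq_bigr => i _; rewrite /bump /= add1n.
Qed.

Lemma pszpow_subr1 h z : h 0%N \is a GRing.unit ->
  psmul (pszpow h (z - 1)) h = pszpow h z.
Proof.
move=> /psmulVr hVh; case: z => [[|k]|k].
- by have -> : Posz 0 - 1 = Negz 0 by []; rewrite /= psmulr1 hVh.
- have -> : Posz k.+1 - 1 = Posz k by lia.
  by rewrite /= psmulC.
- have -> : Negz k - 1 = Negz k.+1 by rewrite !NegzE; lia.
  by rewrite /= -psmulA (psmulC _ h) psmulA hVh psmul1.
Qed.

Lemma upsilon_g_subr1 f rho sigma pi : f 1%N \is a GRing.unit ->
  psmul (upsilon_g f (rho - 1) sigma pi) (psdivx f) = upsilon_g f rho sigma pi.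
Proof.
move=> uf1; rewrite /upsilon_g -psmulA (psmulC _ (psdivx f)) psmulA.
by rewrite -(psmulA _ _ (psdivx f)) (psmulC _ (psdivx f)) psmulA pszpow_subr1.
Qed.

Local Notation "A ** B" := (imul A B) (at level 40, left associativity).

Definition lower_tri (A : imat) := forall n k, (n < k)%N -> A n k = 0.

Definition shiftm : imat := fun n k => (n == k.+1)%:R.

Definition toeplitz (b : ps) : imat :=
  fun n k => if (k <= n)%N then b (n - k)%N else 0.

Lemma lower_tri_shiftm : lower_tri shiftm.
Proof. by move=> n k ltnk; rewrite /shiftm ltn_eqF // ltnW. Qed.

Lemma lower_tri_toeplitz b : lower_tri (toeplitz b).
Proof. by move=> n k ltnk; rewrite /toeplitz leqNgt ltnk. Qed.

Lemma lower_tri_imul A B : lower_tri B -> lower_tri (A ** B).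
Proof.
move=> lB n k ltnk; rewrite /imul big1 // => -[j /= ltjn] _.
by rewrite lB ?mulr0 // (leq_ltn_trans _ ltnk) // -ltnS.
Qed.

Lemma sum_mul_delta (F : nat -> int) N m :
  \sum_(j < N) F j * ((j : nat) == m)%:R = if (m < N)%N then F m else 0.
Proof.
elim: N => [|N IHN]; first by rewrite big_ord0.
rewrite big_ord_recr /= IHN ltnS.
by case: ltngtP => [_|_|->]; rewrite ?mulr0 ?addr0 ?mulr1 ?add0r.
Qed.

Lemma imulA A B C : lower_tri B -> A ** B ** C = A ** (B ** C).
Proof.
move=> lB; apply: imat_ext => n k; rewrite /imul.
under eq_bigr => j _ do rewrite big_distrl /=.
rewrite exchange_big /=; apply: eq_bigr => -[i /= ltin] _.
rewrite big_distrr /= (big_ord_widen n.+1 (fun j => A n i * (B i j * C j k))) //.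
rewrite [RHS]big_mkcond /=; apply: eq_bigr => j _.
by rewrite mulrA; case: ltnP => // ltij; rewrite lB ?mulr0 ?mul0r.
Qed.

Lemma imul1m A : iid ** A = A.
Proof.
apply: imat_ext => n k; rewrite /imul /iid.
under eq_bigr => j _ do rewrite mulrC eq_sym.
by rewrite (sum_mul_delta (fun j => A j k)) ltnSn.
Qed.

Lemma imulm1 A : lower_tri A -> A ** iid = A.
Proof.
move=> lA; apply: imat_ext => n k; rewrite /imul /iid sum_mul_delta.
by case: ltnP => // ltnk; rewrite lA.
Qed.

Lemma imul_shiftm A n k : (shiftm ** A) n k = if n is n'.+1 then A n' k else 0.
Proof.
rewrite /imul /shiftm; case: n => [|n].
  by rewrite big1 // => j _; rewrite mul0r.
under eq_bigr => j _ do rewrite eqSS mulrC eq_sym.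
by rewrite (sum_mul_delta (fun j => A j k)) ltnS leqnSn.
Qed.

Lemma imulm_shiftm A : lower_tri A -> forall n k, (A ** shiftm) n k = A n k.+1.
Proof.
move=> lA n k; rewrite /imul /shiftm sum_mul_delta.
by case: ltnP => // ltnk; rewrite lA.
Qed.

Lemma imul_toeplitz b A n k : (toeplitz b ** A) n k = psmul (A^~ k) b n.
Proof. by apply: eq_bigr => -[j /= ltjn] _; rewrite /toeplitz -ltnS ltjn mulrC. Qed.

Lemma shiftm_lcancel A B : shiftm ** A = shiftm ** B -> A = B.
Proof.
by move=> eqAB; apply: imat_ext => n k; move: (congr1 (fun C => C n.+1 k) eqAB);
  rewrite /= !imul_shiftm.
Qed.

Section ShiftRelations.

Variables R N T M : imat.
Hypotheses (lR : lower_tri R) (lN : lower_tri N).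
Hypotheses (RR : R ** R = iid) (RD : R ** shiftm = T ** R).
Hypotheses (DN : shiftm ** N = T) (NM : N ** M = R).

Lemma NR_involutive : N ** R ** (N ** R) = iid.
Proof.
have lNR : lower_tri (N ** R) by exact: lower_tri_imul.
apply: shiftm_lcancel; rewrite (imulm1 lower_tri_shiftm).
rewrite -(imulA _ _ lNR) -(imulA shiftm _ lN) DN -RD (imulA _ _ lower_tri_shiftm).
by rewrite -(imulA _ _ lN) DN -RD -(imulA _ _ lR) RR imul1m.
Qed.

Lemma RN_involutive : R ** N ** (R ** N) = iid.
Proof.
have := congr1 (fun X => R ** (X ** R)) NR_involutive.
rewrite /= imul1m RR (imulA (N ** R) R (lower_tri_imul N lR)) (imulA N R lR) RR.
by rewrite (imulm1 lN) (imulA N N lR) -(imulA R (R ** N) lN).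
Qed.

Lemma involution_of_shift_relations : M ** M = iid.
Proof.
have eqM : M = R ** N.
  have lRN : lower_tri (R ** N) by exact: lower_tri_imul.
  rewrite -[LHS]imul1m -RN_involutive (imulA (R ** N) M lRN) (imulA R M lN).
  by rewrite NM RR (imulm1 lRN).
by rewrite eqM RN_involutive.
Qed.

End ShiftRelations.

Lemma pspow_eq0 f k n : f 0%N = 0 -> (n < k)%N -> pspow f k n = 0.
Proof.
move=> f0; elim: k n => // k IHk n ltnk; rewrite /= /psmul big1 // => -[[|i] /= ltin] _.
  by rewrite f0 mul0r.
by rewrite IHk ?mulr0 //; lia.
Qed.

Lemma lower_tri_riordan g f : f 0%N = 0 -> lower_tri (riordan g f).
Proof.
move=> f0 n k ltnk; rewrite /riordan /psmul big1 // => i _.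
by rewrite pspow_eq0 ?mulr0 // (leq_ltn_trans _ ltnk) ?leq_subr.
Qed.

Lemma riordan_shiftm g f : f 0%N = 0 ->
  riordan g f ** shiftm = toeplitz f ** riordan g f.
Proof.
move=> f0; apply: imat_ext => n k.
rewrite (imulm_shiftm (lower_tri_riordan g f0)) imul_toeplitz /riordan /=.
by rewrite -psmulA (psmulC (pspow f k)).
Qed.

Lemma shiftm_toeplitz_divx f : f 0%N = 0 ->
  shiftm ** toeplitz (psdivx f) = toeplitz f.
Proof.
move=> f0; apply: imat_ext => -[|n] k; rewrite imul_shiftm /toeplitz.
  by case: k.
case: (ltngtP k n.+1) => [ltkn|ltnk|->]; last by rewrite ltnn subnn f0.
- by rewrite -ltnS ltkn /psdivx subSn.
- by rewrite leqNgt ltnW.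
Qed.

Lemma toeplitz_divx_almost_riordan a g f : f 0%N = 0 -> psmul a (psdivx f) = g ->
  toeplitz (psdivx f) ** almost_riordan a g f = riordan g f.
Proof.
move=> f0 ag; apply: imat_ext => n [|k]; rewrite imul_toeplitz /riordan.
  by rewrite -ag psmulr1.
have -> : (almost_riordan a g f)^~ k.+1 = psshift (psmul g (pspow f k)).
  by apply: ps_ext => -[].
rewrite psmul_shiftl -psmul_shiftr (psshift_divx f0) /=.
by rewrite -psmulA (psmulC (pspow f k)).
Qed.

Lemma involutionE A : involution A <-> A ** A = iid.
Proof. by split=> [/imat_ext | AA n k]; last rewrite AA. Qed.

Theorem mainTheorem11 (f : ps) (rho sigma pi : int) :
  f 0%N = 0 ->
  (f 1%N = 1 \/ f 1%N = -1) ->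
  involution (riordan (upsilon_g f rho sigma pi) f) ->
  involution (almost_riordan (upsilon_g f (rho - 1) sigma pi)
                             (upsilon_g f rho sigma pi) f).
Proof.
move=> f0 f1 /involutionE RR; apply/involutionE.
have uf1 : f 1%N \is a GRing.unit by case: f1 => ->; rewrite ?unitr1 ?unitrN1.
apply: (involution_of_shift_relations (lower_tri_riordan _ f0)
          (lower_tri_toeplitz _) RR (riordan_shiftm _ f0) (shiftm_toeplitz_divx f0)).
exact/toeplitz_divx_almost_riordan/upsilon_g_subr1.
Qed.
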